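(* Let $M$ be a dihedral axial decomposition algebra of Majorana type $(\eta,\eta)$ over a field $\mathbb{F}$ with $\operatorname{char}\mathbb{F}\neq2$, where $\eta\in\mathbb{F}\setminus\{0,1,\tfrac12\}$, with generating axes $(a_i)_{i\in\mathbb{Z}}$. Let $x,y\in M$ satisfy (i) $f_2(x)=-\tau_0(x)$, $f_3(x)=x$ and $x+f_1(x)+f_2(x)=0$; (ii) $f_1(y)=-y$ and $\tau_0(y)=y$. Suppose there exist $\alpha_0,\dots,\alpha_k\in\mathbb{F}$ with $x+y+\sum_{i=0}^k\alpha_i(a_{i+1}-a_{-i})=0$. Then: (1) $\alpha_k(a_{k+2}-a_{-k-2})+\sum_{i=1}^{k+1}(\alpha_{i+1}+2\alpha_i+2\alpha_{i-1}+\alpha_{i-2})(a_i-a_{-i})=0$, where $\alpha_{k+1}=\alpha_{k+2}=0$ and $\alpha_{-1}=-\alpha_0$. Moreover, if $\alpha_k\neq0$, then $\operatorname{adim}\le 2k+4$, and if $\operatorname{adim}=2k+4$, then $M$ satisfies an odd relation. (2) If $x=0$, then $\alpha_k(a_{k+1}-a_{-k-1})+\sum_{i=1}^k(\alpha_i+\alpha_{i-1})(a_i-a_{-i})=0$. Moreover, if $\alpha_k\neq0$, then $\operatorname{adim}\le 2k+2$, and if $\operatorname{adim}=2k+2$, then $M$ satisfies an odd relation.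
   Context: $M$ is a commutative nonassociative $\mathbb{F}$-algebra. With $\Phi(0)=0,\Phi(1)=1,\Phi(2)=\Phi(3)=\eta$, an axis $a\in M$ is an element together with a decomposition $M=\bigoplus_{i=0}^3M^i(a)$ such that $xa=\Phi(i)x$ for $x\in M^i(a)$, $M^1(a)=\mathbb{F}a$, and $M^0(a)M^i(a)\subset M^i(a)$ for all $i$, $M^2(a)M^2(a)\subset M^0(a)\oplus M^1(a)$, $M^2(a)M^3(a)\subset M^3(a)$, $M^3(a)M^3(a)\subset M^0(a)\oplus M^1(a)\oplus M^2(a)$. The Miyamoto involution $\tau(a)$ is the automorphism acting as $1$ on $M^0(a)\oplus M^1(a)\oplus M^2(a)$ and $-1$ on $M^3(a)$. $M$ is dihedral (of Majorana type $(\eta,\eta)$) with axes $(a_i)_{i\in\mathbb{Z}}$ if: $M$ is generated by the $a_i$; $a_i\mapsto a_{i+1}$ extends to an automorphism of $M$; and $\tau(a_j)(a_i)=a_{2j-i}$ for all $i,j$. Notation: $f_i$ is the automorphism with $f_i(a_j)=a_{i+j}$ for all $j$; $\tau_0=\tau(a_0)$. The axial dimension $\operatorname{adim}$ is $\dim_{\mathbb{F}}\operatorname{Span}\{a_i: i\in\mathbb{Z}\}$. $M$ satisfies an odd relation if either $\operatorname{adim}=2m$ and there are $\beta_1,\dots,\beta_m\in\mathbb{F}$ with $\beta_m\neq0$ and $\sum_{i=1}^m\beta_i(a_i-a_{-i})=0$, or $\operatorname{adim}=2m+1$ and there are $\beta_0,\dots,\beta_m\in\mathbb{F}$ with $\beta_m\neq0$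 and $\sum_{i=0}^m\beta_i(a_{i+1}-a_{-i})=0$. *)

From HB Require Import structures.
From mathcomp Require Import all_boot all_order all_algebra.
Set Implicit Arguments. Unset Strict Implicit. Unset Printing Implicit Defensive.
Import Order.TTheory GRing.Theory Num.Theory.
Local Open Scope ring_scope.

Section AxialDefs.
Variables (F : fieldType) (M : lmodType F).

Definition comm_algebra (mul : M -> M -> M) : Prop :=
  (forall x y, mul x y = mul y x) /\
  (forall (c : F) x y z, mul (c *: x + y) z = c *: mul x z + mul y z).

Definition subspace (V : M -> Prop) : Prop :=
  V 0 /\ forall (c : F) x y, V x -> V y -> V (c *: x + y).

Definition Phi (eta : F) (i : nat) : F :=
  match i with 0 => 0 | 1 => 1 | _ => eta end.

Definition axis (mul : M -> M -> M) (eta : F) (a : M) (V : nat -> M -> Prop) : Prop :=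
  [/\ (forall i, (i < 4)%N -> subspace (V i)),
      (forall x, exists x0 x1 x2 x3,
          [/\ V 0%N x0, V 1%N x1, V 2%N x2, V 3%N x3 & x = x0 + x1 + x2 + x3]),
      (forall x0 x1 x2 x3, V 0%N x0 -> V 1%N x1 -> V 2%N x2 -> V 3%N x3 ->
          x0 + x1 + x2 + x3 = 0 -> [/\ x0 = 0, x1 = 0, x2 = 0 & x3 = 0]),
      (forall i x, (i < 4)%N -> V i x -> mul x a = Phi eta i *: x) &
      [/\
          (forall x, V 1%N x <-> exists c : F, x = c *: a),
          (forall i x y, (i < 4)%N -> V 0%N x -> V i y -> V i (mul x y)),
          (forall x y, V 2%N x -> V 2%N y ->
             exists u v, [/\ V 0%N u, V 1%N v & mul x y = u + v]),
          (forall x y, V 2%N x -> V 3%N y -> V 3%N (mul x y)) &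
          (forall x y, V 3%N x -> V 3%N y ->
             exists u v w, [/\ V 0%N u, V 1%N v, V 2%N w & mul x y = u + v + w])]].

(* miyamoto V x z : z is the image of x under the Miyamoto involution of the
   axis with decomposition V (identity on V0+V1+V2, minus identity on V3). *)
Definition miyamoto (V : nat -> M -> Prop) (x z : M) : Prop :=
  exists x0 x1 x2 x3,
    [/\ V 0%N x0, V 1%N x1, V 2%N x2, V 3%N x3 &
        (x = x0 + x1 + x2 + x3 /\ z = x0 + x1 + x2 - x3)].

Definition automorphism (mul : M -> M -> M) (f : M -> M) : Prop :=
  [/\ (forall (c : F) x y, f (c *: x + y) = c *: f x + f y),
      bijective f &
      (forall x y, f (mul x y) = mul (f x) (f y))].

Definition generated_by (mul : M -> M -> M) (a : int -> M) : Prop :=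
  forall S : M -> Prop, subspace S -> (forall x y, S x -> S y -> S (mul x y)) ->
    (forall i, S (a i)) -> forall x, S x.

Definition dihedral (mul : M -> M -> M) (eta : F) (a : int -> M)
    (V : int -> nat -> M -> Prop) : Prop :=
  [/\ forall j, axis mul eta (a j) (V j),
      generated_by mul a,
      (exists f, automorphism mul f /\ forall i, f (a i) = a (i + 1)) &
      (forall i j, miyamoto (V j) (a i) (a (2 * j - i)))].

Definition in_span (s : seq M) (v : M) : Prop :=
  exists c : 'I_(size s) -> F, v = \sum_(i < size s) c i *: s`_i.

Definition lin_indep (s : seq M) : Prop :=
  forall c : 'I_(size s) -> F, \sum_(i < size s) c i *: s`_i = 0 -> forall i, c i = 0.

Definition in_span_a (a : int -> M) (v : M) : Prop :=
  exists l : seq int, in_span (map a l) v.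

Definition has_adim (a : int -> M) (n : nat) : Prop :=
  exists s : seq M, [/\ size s = n, lin_indep s,
    (forall i : 'I_(size s), in_span_a a s`_i) & (forall j, in_span s (a j))].

Definition adim_le (a : int -> M) (n : nat) : Prop :=
  exists m, (m <= n)%N /\ has_adim a m.

Definition odd_relation (a : int -> M) : Prop :=
  exists m : nat,
    ((0 < m)%N /\ has_adim a (2 * m) /\
      exists beta : nat -> F, beta m != 0 /\
        \sum_(1 <= i < m.+1) beta i *: (a i%:Z - a (- i%:Z)) = 0)
 \/ (has_adim a (2 * m).+1 /\
      exists beta : nat -> F, beta m != 0 /\
        \sum_(0 <= i < m.+1) beta i *: (a (i%:Z + 1) - a (- i%:Z)) = 0).

End AxialDefs.

(* alpha_0..alpha_k extended by alpha_{k+1} = alpha_{k+2} = ... = 0 and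
   alpha_{-1} = - alpha_0 (other negative indices are never used). *)
Definition alpha_ext (F : fieldType) (k : nat) (alpha : nat -> F) (j : int) : F :=
  match j with
  | Posz n => if (n <= k)%N then alpha n else 0
  | Negz 0 => - alpha 0%N
  | Negz _ => 0
  end.

From HB Require Import structures.
From mathcomp Require Import all_boot all_order all_algebra.
From mathcomp Require Import zify ring.
From Stdlib Require Import Classical.
Import Order.TTheory GRing.Theory Num.Theory.
Local Open Scope ring_scope.
Set Implicit Arguments. Unset Strict Implicit. Unset Printing Implicit Defensive.

(* Put S_m := sum_i alpha_i (a_(m+i+1) - a_(m-i)), so that f S_m = S_(m+1) and
   tau_0 S_0 = - S_(-1).  Applying f and tau_0 to x + y + S_0 = 0 and eliminating x
   and y with the hypotheses gives S_(-1) + 2 S_0 + 2 S_1 + S_2 = 0, and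
   S_(-1) + S_0 = 0 when x = 0.  Regrouped, these are relations antisymmetric about
   a_1 (resp. a_0), i.e. combinations of the a_(m+i) - a_(m-i), whose coefficients
   come out as stated thanks to the convention alpha_(-1) = - alpha_0.  Shifting such
   a relation of order K with nonzero top coefficient by powers of f expresses every
   a_j through the window a_(1-K), ..., a_K, so adim <= 2K; when adim = 2K, the
   relation centred at a_0 is itself an odd relation. *)

Section Spans.
Variables (F : fieldType) (M : lmodType F).
Implicit Types (s : seq M) (u v w : M) (P : M -> Prop).

Lemma subspace_add P u v : subspace P -> P u -> P v -> P (u + v).
Proof. by case=> _ linP Pu Pv; rewrite -[u]scale1r; apply: linP. Qed.

Lemma subspace_scale P (c : F) u : subspace P -> P u -> P (c *: u).
Proof. by case=> P0 linP Pu; rewrite -[_ *: u]addr0; apply: linP. Qed.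

Lemma subspace_sub P u v : subspace P -> P u -> P v -> P (u - v).
Proof. by case=> _ linP Pu Pv; rewrite addrC -scaleN1r; apply: linP. Qed.

Lemma subspace_sum P (I : Type) (r : seq I) (Q : pred I) (G : I -> M) :
  subspace P -> (forall i, Q i -> P (G i)) -> P (\sum_(i <- r | Q i) G i).
Proof.
move=> subP PG; apply: (big_ind P) => //; first by case: subP.
by move=> u v; apply: subspace_add.
Qed.

(* [in_span] and [lin_indep] with coefficients indexed by [nat] rather than by
   ['I_(size s)], which makes them easy to manipulate under [cons]. *)
Definition nspan s v := exists c : nat -> F, v = \sum_(i < size s) c i *: s`_i.

Definition nfree s := forall c : nat -> F,
  \sum_(i < size s) c i *: s`_i = 0 -> forall i, (i < size s)%N -> c i = 0.

Lemma nspan_subspace s : subspace (nspan s).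
Proof.
split; first by exists (fun=> 0); rewrite big1 // => i _; rewrite scale0r.
move=> c _ _ [d ->] [e ->]; exists (fun i => c * d i + e i).
by rewrite scaler_sumr -big_split; apply: eq_bigr => i _; rewrite scalerDl scalerA.
Qed.

Lemma nspan_consP u s v :
  nspan (u :: s) v <-> exists2 w, nspan s w & exists c : F, v = c *: u + w.
Proof.
split=> [[c ->]|[w [d ->] [c ->]]].
  rewrite /= big_ord_recl; exists (\sum_(i < size s) c i.+1 *: s`_i).
    by exists (fun i => c i.+1).
  by exists (c 0%N).
by exists (fun i => if i is j.+1 then d j else c); rewrite /= big_ord_recl.
Qed.

Lemma nspan_cons u s v : nspan s v -> nspan (u :: s) v.
Proof. by move=> sv; apply/nspan_consP; exists v => //; exists 0; rewrite scale0r add0r. Qed.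

Lemma nspan_head u s : nspan (u :: s) u.
Proof.
apply/nspan_consP; exists 0; first by case: (nspan_subspace s).
by exists 1; rewrite scale1r addr0.
Qed.

Lemma nspan_mem s v : v \in s -> nspan s v.
Proof.
elim: s => // u s IHs; rewrite in_cons => /orP [/eqP ->|/IHs]; first exact: nspan_head.
exact: nspan_cons.
Qed.

Lemma nfree_cons u s : nfree s -> ~ nspan s u -> nfree (u :: s).
Proof.
move=> free_s not_su c; rewrite /= big_ord_recl /= => sum0.
have c0 : c 0%N = 0.
  have [//|c0_neq0] := eqVneq (c 0%N) 0; case: not_su.
  exists (fun i => - (c 0%N)^-1 * c i.+1).
  apply: (scalerI c0_neq0); rewrite scaler_sumr.
  have -> : c 0%N *: u = - \sum_(i < size s) c i.+1 *: s`_i.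
    by apply/eqP; rewrite -addr_eq0 sum0.
  rewrite -sumrN; apply: eq_bigr => i _.
  by rewrite scalerA mulrA mulrN mulfV // mulN1r scaleNr.
rewrite c0 scale0r add0r in sum0.
by case=> [|i] //= /(free_s (fun i => c i.+1) sum0).
Qed.

Lemma nspan_basis (L : seq M) : exists s, [/\ (size s <= size L)%N, nfree s,
  {subset s <= L} & forall v, nspan L v -> nspan s v].
Proof.
elim: L => [|u L [s [size_s free_s sub_s span_s]]].
  by exists [::]; split=> // c _ i.
have span_us v : nspan (u :: L) v -> exists2 w, nspan s w & exists c : F, v = c *: u + w.
  by case/nspan_consP=> w /span_s; exists w.
have [su|not_su] := classic (nspan s u).
  exists s; split=> //; first exact: leqW.
    by move=> v /sub_s; rewrite in_cons orbC => ->.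
  by move=> v /span_us [w sw [c ->]]; case: (nspan_subspace s) => _; apply.
exists (u :: s); split=> //; first exact: nfree_cons.
  by move=> v; rewrite !in_cons => /orP [-> //|/sub_s ->]; rewrite orbT.
move=> v /span_us [w sw [c ->]]; case: (nspan_subspace (u :: s)) => _; apply.
  exact: nspan_head.
exact: nspan_cons.
Qed.

Lemma adim_le_of_span (a : int -> M) (l : seq int) :
  (forall j, nspan (map a l) (a j)) -> adim_le a (size l).
Proof.
move=> span_a; have [s [size_s free_s sub_s span_s]] := nspan_basis (map a l).
exists (size s); split; first by rewrite size_map in size_s.
exists s; split=> //.
- move=> c sum0 i; pose c' n := if insub n is Some j then c j else 0.
  have c'E (j : 'I_(size s)) : c' j = c j by rewrite /c' valK.
  rewrite -c'E; apply: free_s (ltn_ord i).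
  by rewrite -[RHS]sum0; apply: eq_bigr => j _; rewrite c'E.
- move=> i; have /mapP [j _ ->] := sub_s _ (mem_nth 0 (ltn_ord i)).
  by exists [:: j], (fun=> 1); rewrite big_ord1 scale1r.
- by move=> j; have [c ->] := span_s _ (span_a j); exists (fun i => c i).
Qed.

End Spans.

Lemma int_window_ind (P : int -> Prop) (lo : int) (n : nat) :
  (forall i, lo <= i < lo + n%:Z -> P i) ->
  (forall j, (forall i, j - n%:Z <= i < j -> P i) -> P j) ->
  (forall j, (forall i, j < i <= j + n%:Z -> P i) -> P j) ->
  forall j, P j.
Proof.
move=> P_lo P_up P_down.
have P_around d i : lo - d%:Z <= i < lo + n%:Z + d%:Z -> P i.
  elim: d i => [|d IHd] i i_in; first by apply: P_lo; lia.
  have [|i_out] := boolP (lo - d%:Z <= i < lo + n%:Z + d%:Z); first exact: IHd.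
  have [/eqP i_top|i_ntop] := boolP (i == lo + n%:Z + d%:Z).
    by apply: P_up => i' ?; apply: IHd; lia.
  by apply: P_down => i' ?; apply: IHd; lia.
by move=> j; apply: (P_around `|j - lo|.+1); lia.
Qed.

Lemma subr_swap (V : zmodType) (p q r s : V) : (p - q) + (r - s) = (r - q) + (p - s).
Proof. by rewrite addrACA [p + r]addrC addrACA. Qed.

Lemma addr4ACA (V : zmodType) (u0 u1 u2 u3 v0 v1 v2 v3 : V) :
  (u0 + u1 + u2 + u3) + (v0 + v1 + v2 + v3)
  = (u0 + v0) + (u1 + v1) + (u2 + v2) + (u3 + v3).
Proof. by rewrite addrACA; congr (_ + _); rewrite addrACA; congr (_ + _); rewrite addrACA. Qed.

Section SkewSums.
Variables (F : fieldType) (M : lmodType F) (a : int -> M).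
Implicit Types (c : int -> F) (n : nat) (m : int).

Definition skew_sum c n m :=
  \sum_(0 <= i < n) c i%:Z *: (a (m + i%:Z) - a (m - i%:Z)).

Definition half_skew_sum c n m :=
  \sum_(0 <= i < n) c i%:Z *: (a (m + i%:Z + 1) - a (m - i%:Z)).

Lemma skew_sumE c n m : skew_sum c n.+1 m = c n%:Z *: (a (m + n%:Z) - a (m - n%:Z))
  + \sum_(1 <= i < n) c i%:Z *: (a (m + i%:Z) - a (m - i%:Z)).
Proof.
rewrite /skew_sum big_nat_recr //= addrC; congr (_ + _).
case: n => [|n]; first by rewrite !big_geq.
by rewrite big_ltn // subr0 subrr scaler0 add0r.
Qed.

Lemma skew_sum0E c n : skew_sum c n.+1 0 = c n%:Z *: (a n%:Z - a (- n%:Z))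
  + \sum_(1 <= i < n) c i%:Z *: (a i%:Z - a (- i%:Z)).
Proof.
rewrite skew_sumE add0r sub0r; congr (_ + _).
by apply: eq_bigr => i _; rewrite add0r sub0r.
Qed.

Lemma skew_sumD c d n m :
  skew_sum (fun j => c j + d j) n m = skew_sum c n m + skew_sum d n m.
Proof. by rewrite /skew_sum -big_split; apply: eq_bigr => i _; rewrite scalerDl. Qed.

Lemma skew_sum_trailing0 c n m : c n%:Z = 0 -> skew_sum c n.+1 m = skew_sum c n m.
Proof. by move=> cn0; rewrite /skew_sum big_nat_recr //= cn0 scale0r addr0. Qed.

Lemma skew_sum_shiftr c n m : skew_sum (fun j => c (j - 1)) n.+1 m =
  \sum_(0 <= i < n) c i%:Z *: (a (m + i%:Z + 1) - a (m - i%:Z - 1)).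
Proof.
rewrite /skew_sum big_nat_recl // subr0 subrr scaler0 add0r.
by apply: eq_bigr => i _; congr (c _ *: (a _ - a _)); lia.
Qed.

Lemma half_skew_sum_pair c n m : c n%:Z = 0 ->
  half_skew_sum c n (m - 1) + half_skew_sum c n m
  = skew_sum (fun j => c j + c (j - 1)) n.+1 m.
Proof.
move=> cn0; rewrite skew_sumD skew_sum_trailing0 // skew_sum_shiftr.
rewrite /skew_sum /half_skew_sum -!big_split; apply: eq_bigr => i _ /=.
rewrite -!scalerDr [in RHS]addrC subr_swap; congr (_ *: (a _ - a _ + (a _ - a _))); lia.
Qed.

Lemma skew_sum_triple c n m : c 0 = 0 -> c n%:Z = 0 -> c n.+1%:Z = 0 ->
  skew_sum c n (m - 1) + skew_sum c n m + skew_sum c n (m + 1)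
  = skew_sum (fun j => c (j - 1) + c j + c (j + 1)) n.+1 m.
Proof.
move=> c00 cn0 cn10; rewrite !skew_sumD skew_sum_shiftr skew_sum_trailing0 //.
have -> : skew_sum (fun j => c (j + 1)) n.+1 m
    = \sum_(0 <= i < n) c i%:Z *: (a (m + i%:Z - 1) - a (m - i%:Z + 1)).
  have <- : \sum_(0 <= i < n.+2) c i%:Z *: (a (m + i%:Z - 1) - a (m - i%:Z + 1))
      = \sum_(0 <= i < n) c i%:Z *: (a (m + i%:Z - 1) - a (m - i%:Z + 1)).
    by rewrite !big_nat_recr //= cn0 cn10 !scale0r !addr0.
  rewrite /skew_sum [RHS]big_nat_recl // c00 scale0r add0r.
  by apply: eq_bigr => i _; congr (c _ *: (a _ - a _)); lia.
rewrite addrAC [RHS]addrAC /skew_sum -!big_split; apply: eq_bigr => i _ /=.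
rewrite -!scalerDr subr_swap; congr (_ *: (a _ - a _ + (a _ - a _) + _)); lia.
Qed.

End SkewSums.

Section SkewRelationSpan.
Variables (F : fieldType) (M : lmodType F) (a : int -> M).

Lemma scale_subr_eq0 (b : F) (u v w : M) : b != 0 ->
  b *: (u - v) + w = 0 -> u - v = - b^-1 *: w.
Proof.
move=> b0 /eqP; rewrite addr_eq0 => /eqP /(congr1 ( *:%R b^-1)).
by rewrite scalerA mulVf // scale1r scaleNr scalerN.
Qed.

Lemma adim_le_of_skew_relation (c : int -> F) (K : nat) : (0 < K)%N ->
  c K%:Z != 0 -> (forall m, skew_sum a c K.+1 m = 0) -> adim_le a (2 * K).
Proof.
move=> K_gt0 cK0 rel.
pose l := [seq i%:Z + (1 - K%:Z) | i <- iota 0 (2 * K)].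
have -> : (2 * K)%N = size l by rewrite size_map size_iota.
apply: adim_le_of_span.
have span_l := nspan_subspace (map a l).
have span_inner m : (forall i, m - K%:Z < i < m + K%:Z -> nspan (map a l) (a i)) ->
    nspan (map a l) (\sum_(1 <= i < K) c i%:Z *: (a (m + i%:Z) - a (m - i%:Z))).
  move=> span_mid; rewrite big_nat_cond; apply: subspace_sum => // i.
  rewrite andbT => /andP [? ?]; apply: subspace_scale => //.
  by apply: subspace_sub => //; apply: span_mid; lia.
have rel_ends m : a (m + K%:Z) - a (m - K%:Z)
    = - (c K%:Z)^-1 *: \sum_(1 <= i < K) c i%:Z *: (a (m + i%:Z) - a (m - i%:Z)).
  by apply: scale_subr_eq0 cK0 _; rewrite -skew_sumE.
(* Centred at j - K (resp. j + K), a relation expresses a_j through the 2K axes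
   below (resp. above) it. *)
apply: (@int_window_ind _ (1 - K%:Z) (2 * K)).
- move=> i i_in; apply/nspan_mem/map_f/mapP.
  by exists (absz (i - (1 - K%:Z))%R); [rewrite mem_iota | ]; lia.
- move=> j span_below; have := rel_ends (j - K%:Z).
  rewrite (_ : j - K%:Z + K%:Z = j); last by lia.
  move/eqP; rewrite subr_eq => /eqP ->; case: span_l => _; apply.
    by apply: span_inner => i ?; apply: span_below; lia.
  by apply: span_below; lia.
- move=> j span_above; have := rel_ends (j + K%:Z).
  rewrite (_ : j + K%:Z - K%:Z = j); last by lia.
  move=> /(congr1 (fun z => a (j + K%:Z + K%:Z) - z)); rewrite subKr => ->.
  apply: subspace_sub => //; first by apply: span_above; lia.
  by apply: subspace_scale => //; apply: span_inner => i ?; apply: span_above; lia.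
Qed.

Lemma odd_relation_of_skew_relation (c : int -> F) (K : nat) : (0 < K)%N ->
  c K%:Z != 0 -> skew_sum a c K.+1 0 = 0 -> has_adim a (2 * K) -> odd_relation a.
Proof.
move=> K_gt0 cK0 rel adimK; exists K; left; do 2!split=> //.
exists (fun i => c i%:Z); split=> //.
by rewrite big_nat_recr //= addrC -skew_sum0E.
Qed.

End SkewRelationSpan.

Section AutomorphismShift.
Variables (F : fieldType) (M : lmodType F) (a : int -> M) (f : M -> M).
Hypothesis f_lin : forall (c : F) x y, f (c *: x + y) = c *: f x + f y.
Hypothesis f_a : forall i, f (a i) = a (i + 1).

HB.instance Definition _ := GRing.isLinear.Build F M M *:%R f f_lin.

Lemma f_skew_sum c n m : f (skew_sum a c n m) = skew_sum a c n (m + 1).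
Proof.
rewrite /skew_sum linear_sum; apply: eq_bigr => i _.
by rewrite linearZ linearB /= !f_a; congr (_ *: (a _ - a _)); lia.
Qed.

Lemma f_half_skew_sum c n m : f (half_skew_sum a c n m) = half_skew_sum a c n (m + 1).
Proof.
rewrite /half_skew_sum linear_sum; apply: eq_bigr => i _.
by rewrite linearZ linearB /= !f_a; congr (_ *: (a _ - a _)); lia.
Qed.

Hypothesis f_inj : injective f.

Lemma skew_sum_eq0_shift c n m0 :
  skew_sum a c n m0 = 0 -> forall m, skew_sum a c n m = 0.
Proof.
move=> rel0 m; rewrite -(subrK m0 m); elim/int_ind: (m - m0) => [|d IHd|d IHd].
- by rewrite add0r.
- rewrite (_ : d.+1%:Z + m0 = d%:Z + m0 + 1); last by lia.
  by rewrite -f_skew_sum IHd linear0.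
- apply: f_inj; rewrite linear0 f_skew_sum -[RHS]IHd; congr skew_sum; lia.
Qed.

Lemma skew_relation_adim c K m0 : (0 < K)%N -> c K%:Z != 0 ->
  skew_sum a c K.+1 m0 = 0 ->
  adim_le a (2 * K) /\ (has_adim a (2 * K) -> odd_relation a).
Proof.
move=> K_gt0 cK0 /skew_sum_eq0_shift rel; split.
  exact: adim_le_of_skew_relation K_gt0 cK0 rel.
exact: odd_relation_of_skew_relation K_gt0 cK0 (rel 0).
Qed.

End AutomorphismShift.

Section Miyamoto.
Variables (F : fieldType) (M : lmodType F) (mul : M -> M -> M) (eta : F).
Variables (a0 : M) (V : nat -> M -> Prop).
Hypothesis axis_a0 : axis mul eta a0 V.

Lemma miyamoto0 : miyamoto V 0 0.
Proof.
case: axis_a0 => subV _ _ _ _.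
have V0 i : (i < 4)%N -> V i 0 by move=> /subV [].
by exists 0, 0, 0, 0; split; try exact: V0; rewrite subr0 !addr0.
Qed.

Lemma miyamoto_lin (c : F) x z x' z' : miyamoto V x z -> miyamoto V x' z' ->
  miyamoto V (c *: x + x') (c *: z + z').
Proof.
case: axis_a0 => subV _ _ _ _.
have linV i u v : (i < 4)%N -> V i u -> V i v -> V i (c *: u + v).
  by move=> /subV [_ linVi]; apply: linVi.
move=> [x0 [x1 [x2 [x3 [Vx0 Vx1 Vx2 Vx3 [-> ->]]]]]].
move=> [y0 [y1 [y2 [y3 [Vy0 Vy1 Vy2 Vy3 [-> ->]]]]]].
exists (c *: x0 + y0), (c *: x1 + y1), (c *: x2 + y2), (c *: x3 + y3).
split; try exact: linV.
by split; rewrite !scalerDr ?scalerN addr4ACA // opprD.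
Qed.

Lemma miyamoto_fun x z z' : miyamoto V x z -> miyamoto V x z' -> z = z'.
Proof.
case: axis_a0 => subV _ direct _ _.
have subrV i u v : (i < 4)%N -> V i u -> V i v -> V i (u - v).
  by move=> /subV subVi Vu Vv; apply: subspace_sub.
move=> [x0 [x1 [x2 [x3 [Vx0 Vx1 Vx2 Vx3 [-> ->]]]]]].
move=> [y0 [y1 [y2 [y3 [Vy0 Vy1 Vy2 Vy3 [ex ->]]]]]].
have sum0 : (x0 - y0) + (x1 - y1) + (x2 - y2) + (x3 - y3) = 0.
  by move/eqP: ex; rewrite -subr_eq0 !opprD addr4ACA => /eqP.
have [] := direct _ _ _ _ (subrV 0%N _ _ isT Vx0 Vy0) (subrV 1%N _ _ isT Vx1 Vy1)
  (subrV 2%N _ _ isT Vx2 Vy2) (subrV 3%N _ _ isT Vx3 Vy3) sum0.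
by move=> /subr0_eq -> /subr0_eq -> /subr0_eq -> /subr0_eq ->.
Qed.

Lemma miyamoto_add x z x' z' : miyamoto V x z -> miyamoto V x' z' ->
  miyamoto V (x + x') (z + z').
Proof. by move=> h h'; have := miyamoto_lin 1 h h'; rewrite !scale1r. Qed.

Lemma miyamoto_scale (c : F) x z : miyamoto V x z -> miyamoto V (c *: x) (c *: z).
Proof. by move=> h; have := miyamoto_lin c h miyamoto0; rewrite !addr0. Qed.

Lemma miyamoto_sub x z x' z' : miyamoto V x z -> miyamoto V x' z' ->
  miyamoto V (x - x') (z - z').
Proof.
by move=> h h'; have := miyamoto_lin (-1) h' h; rewrite !scaleN1r ![- _ + _]addrC.
Qed.

Lemma miyamoto_add_eq0 x z x' z' : miyamoto V x z -> miyamoto V x' z' ->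
  x + x' = 0 -> z + z' = 0.
Proof.
by move=> h h' xx'0; apply: miyamoto_fun miyamoto0; rewrite -xx'0; apply: miyamoto_add.
Qed.

Lemma miyamoto_half_skew_sum (a : int -> M) c n m :
  (forall i, miyamoto V (a i) (a (- i))) ->
  miyamoto V (half_skew_sum a c n m) (- half_skew_sum a c n (- m - 1)).
Proof.
move=> tau_a; rewrite /half_skew_sum -sumrN.
apply: (big_ind2 (miyamoto V)); [exact: miyamoto0 | exact: miyamoto_add |].
move=> i _; rewrite -scalerN opprB; apply: miyamoto_scale.
rewrite (_ : - m - 1 - i%:Z = - (m + i%:Z + 1)); last by lia.
rewrite (_ : - m - 1 + i%:Z + 1 = - (m - i%:Z)); last by lia.
exact: miyamoto_sub.
Qed.

End Miyamoto.

Section AxisRelations.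
Variables (F : fieldType) (M : lmodType F) (mul : M -> M -> M) (eta : F).
Variables (a0 : M) (V0 : nat -> M -> Prop) (f : M -> M) (S : int -> M) (x y : M).
Hypothesis axis_a0 : axis mul eta a0 V0.
Hypothesis f_lin : forall (c : F) u v, f (c *: u + v) = c *: f u + f v.
Hypothesis f_S : forall m, f (S m) = S (m + 1).
Hypothesis tau_S : miyamoto V0 (S 0) (- S (-1)).
Hypotheses (tau_x : miyamoto V0 x (- f (f x))) (f3_x : f (f (f x)) = x).
Hypotheses (orbit_x : x + f x + f (f x) = 0).
Hypotheses (f_y : f y = - y) (tau_y : miyamoto V0 y y).
Hypothesis xyS : x + y + S 0 = 0.

HB.instance Definition _ := GRing.isLinear.Build F M M *:%R f f_lin.

Lemma consecutive_pairs_eq0 : (S (-1) + S 0) + (S 0 + S 1) + (S 1 + S 2) = 0.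
Proof.
have f_xyS : f x - y + S 1 = 0.
  by have := congr1 f xyS; rewrite !linearD /= f_y f_S add0r linear0.
have f2_x : f (f x) = S 0 + S 1.
  have := congr2 +%R xyS f_xyS; rewrite addr0 (AC (3*3) ((1*4)*(2*5)*(3*6))) /=.
  move/eqP: orbit_x; rewrite subrr addr0 addr_eq0 => /eqP ->.
  by move/eqP; rewrite addrC subr_eq0 => /eqP ->.
have x_S : x = S 1 + S 2 by rewrite -f3_x f2_x linearD /= !f_S.
have y_S : y = - (x + S 0).
  by apply/eqP; rewrite -addr_eq0 addrCA addrA xyS.
have := miyamoto_add_eq0 axis_a0 (miyamoto_add axis_a0 tau_x tau_y) tau_S xyS.
rewrite f2_x y_S x_S => /(congr1 -%R); rewrite oppr0 !opprD !opprK addrA => <-.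
by rewrite [LHS](ACl (3*4*2*1)).
Qed.

Lemma consecutive_pair_eq0_of_x0 : x = 0 -> S (-1) + S 0 = 0.
Proof.
move=> x0; have yS : y + S 0 = 0 by rewrite -xyS x0 add0r.
have := miyamoto_add_eq0 axis_a0 tau_y tau_S yS.
rewrite (_ : y = - S 0); last by apply/eqP; rewrite -addr_eq0 yS.
by rewrite -opprD addrC => /eqP; rewrite oppr_eq0 => /eqP.
Qed.

End AxisRelations.

Section AlphaExt.
Variables (F : fieldType) (k : nat) (alpha : nat -> F).
Local Notation e := (alpha_ext k alpha).

Lemma alpha_ext_le (i : nat) : (i <= k)%N -> e i%:Z = alpha i.
Proof. by rewrite /alpha_ext => ->. Qed.

Lemma alpha_ext_gt (i : nat) : (k < i)%N -> e i%:Z = 0.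
Proof. by move=> ki; rewrite /alpha_ext leqNgt ki. Qed.

Definition alpha_pair (j : int) : F := e j + e (j - 1).

Definition alpha_triple (j : int) : F :=
  alpha_pair (j - 1) + alpha_pair j + alpha_pair (j + 1).

(* This is where the convention alpha_ext (-1) = - alpha 0 is needed. *)
Lemma alpha_pair0 : alpha_pair 0 = 0.
Proof. by rewrite /alpha_pair alpha_ext_le // subrr. Qed.

Lemma alpha_pair_gt (i : nat) : (k.+1 < i)%N -> alpha_pair i%:Z = 0.
Proof.
move=> ki; rewrite /alpha_pair (_ : i%:Z - 1 = i.-1%:Z); last by lia.
by rewrite !alpha_ext_gt ?addr0 //; lia.
Qed.

Lemma alpha_pair_top : alpha_pair k.+1%:Z = alpha k.
Proof.
rewrite /alpha_pair (_ : k.+1%:Z - 1 = k%:Z); last by lia.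
by rewrite alpha_ext_gt // alpha_ext_le // add0r.
Qed.

Lemma alpha_pair_mid (i : nat) : (0 < i <= k)%N -> alpha_pair i%:Z = alpha i + alpha i.-1.
Proof.
move=> /andP [i_gt0 ik]; rewrite /alpha_pair (_ : i%:Z - 1 = i.-1%:Z); last by lia.
by rewrite !alpha_ext_le //; lia.
Qed.

Lemma alpha_triple_top : alpha_triple k.+2%:Z = alpha k.
Proof.
rewrite /alpha_triple.
have -> : k.+2%:Z - 1 = k.+1%:Z by lia.
have -> : k.+2%:Z + 1 = k.+3%:Z by lia.
by rewrite alpha_pair_top !alpha_pair_gt // !addr0.
Qed.

Lemma alpha_tripleE (j : int) :
  alpha_triple j = e (j + 1) + 2%:R * e j + 2%:R * e (j - 1) + e (j - 2).
Proof.
rewrite /alpha_triple /alpha_pair.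
have -> : j - 1 - 1 = j - 2 by lia.
have -> : j + 1 - 1 = j by lia.
by move: (e (j + 1)) (e j) (e (j - 1)) (e (j - 2)) => p q r s; ring.
Qed.

Variables (M : lmodType F) (a : int -> M).

Lemma half_skew_sum_alpha_ext :
  \sum_(0 <= i < k.+1) alpha i *: (a (i%:Z + 1) - a (- i%:Z))
  = half_skew_sum a e k.+1 0.
Proof. by apply: eq_big_nat => i /andP [_ ik]; rewrite alpha_ext_le // add0r sub0r. Qed.

Lemma skew_sum_alpha_triple :
  alpha k *: (a (k%:Z + 2) - a (- k%:Z - 2))
  + \sum_(1 <= i < k.+2)
      (e (i%:Z + 1) + 2%:R * e i%:Z + 2%:R * e (i%:Z - 1) + e (i%:Z - 2))
      *: (a i%:Z - a (- i%:Z))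
  = skew_sum a alpha_triple k.+3 0.
Proof.
rewrite skew_sum0E alpha_triple_top; congr (_ *: (a _ - a _) + _); [lia | lia |].
by apply: eq_bigr => i _; rewrite alpha_tripleE.
Qed.

Lemma skew_sum_alpha_pair :
  alpha k *: (a (k%:Z + 1) - a (- k%:Z - 1))
  + \sum_(1 <= i < k.+1) (alpha i + alpha i.-1) *: (a i%:Z - a (- i%:Z))
  = skew_sum a alpha_pair k.+2 0.
Proof.
rewrite skew_sum0E alpha_pair_top; congr (_ *: (a _ - a _) + _); [lia | lia |].
by apply: eq_big_nat => i /andP [i_gt0 ik]; rewrite alpha_pair_mid // i_gt0 -ltnS.
Qed.

End AlphaExt.

Unset Implicit Arguments.

Theorem lemma1 (F : fieldType) (eta : F)
    (hchar : (2%:R : F) != 0)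
    (heta0 : eta != 0) (heta1 : eta != 1) (heta2 : eta != (2%:R)^-1)
    (M : lmodType F) (mul : M -> M -> M) (hM : comm_algebra mul)
    (a : int -> M) (V : int -> nat -> M -> Prop) (hdih : dihedral mul eta a V)
    (f : M -> M) (hf : automorphism mul f) (hfa : forall i, f (a i) = a (i + 1))
    (x y : M)
    (hx1 : miyamoto (V 0) x (- f (f x)))      (* f_2(x) = - tau_0(x) *)
    (hx2 : f (f (f x)) = x)                    (* f_3(x) = x *)
    (hx3 : x + f x + f (f x) = 0)
    (hy1 : f y = - y)
    (hy2 : miyamoto (V 0) y y)                 (* tau_0(y) = y *)
    (k : nat) (alpha : nat -> F)
    (hrel : x + y + \sum_(0 <= i < k.+1) alpha i *: (a (i%:Z + 1) - a (- i%:Z)) = 0) :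
  (* (1) *)
  (alpha k *: (a (k%:Z + 2) - a (- k%:Z - 2))
     + \sum_(1 <= i < k.+2)
         (alpha_ext k alpha (i%:Z + 1) + 2%:R * alpha_ext k alpha i%:Z
          + 2%:R * alpha_ext k alpha (i%:Z - 1) + alpha_ext k alpha (i%:Z - 2))
         *: (a i%:Z - a (- i%:Z)) = 0
   /\ (alpha k != 0 ->
        adim_le a (2 * k + 4) /\ (has_adim a (2 * k + 4) -> odd_relation a)))
  /\
  (* (2) *)
  (x = 0 ->
     (alpha k *: (a (k%:Z + 1) - a (- k%:Z - 1))
        + \sum_(1 <= i < k.+1) (alpha i + alpha i.-1) *: (a i%:Z - a (- i%:Z)) = 0)
     /\ (alpha k != 0 ->
          adim_le a (2 * k + 2) /\ (has_adim a (2 * k + 2) -> odd_relation a))).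
Proof.
case: hdih => axis_a _ _ tau_a; case: hf => f_lin /bij_inj f_inj _.
have tau0_a i : miyamoto (V 0) (a i) (a (- i)) by have := tau_a i 0; rewrite mulr0 sub0r.
pose S := half_skew_sum a (alpha_ext k alpha) k.+1.
have f_S m : f (S m) = S (m + 1) by apply: f_half_skew_sum.
have tau_S : miyamoto (V 0) (S 0) (- S (-1)) by apply: miyamoto_half_skew_sum tau0_a.
rewrite half_skew_sum_alpha_ext -/(S 0) in hrel.
have S_pair m : S (m - 1) + S m = skew_sum a (alpha_pair k alpha) k.+2 m.
  by apply: half_skew_sum_pair; rewrite alpha_ext_gt.
have -> : (2 * k + 4 = 2 * k.+2)%N by lia.
have -> : (2 * k + 2 = 2 * k.+1)%N by lia.
rewrite skew_sum_alpha_triple skew_sum_alpha_pair; split=> [|x0].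
  have rel1 : skew_sum a (alpha_triple k alpha) k.+3 1 = 0.
    rewrite -skew_sum_triple ?alpha_pair0 ?alpha_pair_gt // -!S_pair.
    exact: consecutive_pairs_eq0 (axis_a 0) f_lin f_S tau_S hx1 hx2 hx3 hy1 hy2 hrel.
  split; first exact: (skew_sum_eq0_shift f_lin hfa f_inj rel1 0).
  by rewrite -alpha_triple_top => ak0; apply: (skew_relation_adim f_lin hfa f_inj _ ak0 rel1).
have rel2 : skew_sum a (alpha_pair k alpha) k.+2 0 = 0.
  by rewrite -S_pair; exact: consecutive_pair_eq0_of_x0 (axis_a 0) tau_S hy2 hrel x0.
split=> //; rewrite -alpha_pair_top => ak0.
by apply: (skew_relation_adim f_lin hfa f_inj _ ak0 rel2).
Qed.
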